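(* Let $\succcurlyeq$ be a preference relation on the set $\mathcal{B}$ of bets over a propositional language $\mathcal{L}$ satisfying Non-Triviality, Objective Expected Utility and Implication, and let $\mathcal{T}\subseteq\mathcal{L}$ be a theory. Then there exists a unique sub-theory $\mathcal{S}\subseteq\mathcal{T}$ such that $\succcurlyeq$ satisfies $\mathcal{S}$-Implication and, for any $\mathcal{S}'$ with $\mathcal{S}\subsetneq\mathcal{S}'\subseteq\mathcal{T}$, $\succcurlyeq$ does not satisfy $\mathcal{S}'$-Implication.
   Context: Let $\mathbb{P}$ be a set of propositional variables containing distinguished $\mathbf{T}$, $\mathbf{F}$, and $\mathcal{L}$ the language generated by $\neg,\land,\lor$; $\phi\implies\psi$ means $\psi$ is deducible from $\phi$ in classical propositional logic. A theory is a set $\mathcal{T}\subseteq\mathcal{L}$ closed under logical implication (anything deducible from elements of $\mathcal{T}$ lies in $\mathcal{T}$) with $\mathbf{F}\notin\mathcal{T}$. For a set of statements $\mathcal{S}$, write $\phi\overset{\mathcal{S}}{\implies}\psi$ if $\psi$ can be deduced from $\phi$ together with the elements of $\mathcal{S}$ in propositional logic. A bet is a finitely supported $b:\mathcal{L}\to[0,1]$ summing to $1$; $b_\phi$ is the point-mass bet on $\phi$; the set $\mathcal{B}$ of bets is a mixture space under pointwise mixtures and $\succcurlyeq$ is a relation on it. Non-Triviality: $b_{\mathbf{T}}\succcurlyeq b_\phi\succcurlyeq b_{\mathbf{F}}$ for all $\phi$ and $b_{\mathbf{T}}\succ b_{\mathbf{F}}$. Objective Expected Utility: $\succcurlyeq$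 is complete, transitive, Archimedean and satisfies Independence. Implication: $\phi\implies\psi$ implies $b_\psi\succcurlyeq b_\phi$. $\mathcal{S}$-Implication: $\phi\overset{\mathcal{S}}{\implies}\psi$ implies $b_\psi\succcurlyeq b_\phi$. *)

From Stdlib Require Import Reals List Classical ClassicalEpsilon.
Open Scope R_scope.
Set Implicit Arguments.

Inductive form (P : Type) : Type :=
| Var : P -> form P
| Neg : form P -> form P
| And : form P -> form P -> form P
| Or  : form P -> form P -> form P.
Arguments Var {P} _.

Section Logic.
Variables (P : Type) (Tv Fv : P).

Definition admissible (v : P -> bool) : Prop := v Tv = true /\ v Fv = false.

Fixpoint eval (v : P -> bool) (f : form P) : bool :=
  match f with
  | Var p => v p
  | Neg a => negb (eval v a)
  | And a b => andb (eval v a) (eval v b)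
  | Or a b => orb (eval v a) (eval v b)
  end.

(* phi ==S==> psi : psi is classically deducible from phi together with the
   elements of S (by soundness/completeness + compactness: semantic consequence). *)
Definition implies_with (S : form P -> Prop) (phi psi : form P) : Prop :=
  forall v, admissible v -> (forall s, S s -> eval v s = true) ->
    eval v phi = true -> eval v psi = true.

Definition implies (phi psi : form P) : Prop :=
  implies_with (fun _ => False) phi psi.

Definition deducible_from (S : form P -> Prop) (psi : form P) : Prop :=
  forall v, admissible v -> (forall s, S s -> eval v s = true) -> eval v psi = true.

Definition is_theory (Th : form P -> Prop) : Prop :=
  (forall psi, deducible_from Th psi -> Th psi) /\ ~ Th (Var Fv).

Definition bet := form P -> R.

Definition is_bet (b : bet) : Prop :=
  (forall f, 0 <= b f <= 1) /\
  exists l : list (form P), NoDup l /\ (forall f, b f <> 0 -> In f l) /\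
    fold_right (fun f acc => b f + acc) 0 l = 1.

Definition point (phi : form P) : bet :=
  fun f => if excluded_middle_informative (f = phi) then 1 else 0.

Definition mix (a : R) (b c : bet) : bet := fun f => a * b f + (1 - a) * c f.

Variable pref : bet -> bet -> Prop.

Definition spref (b c : bet) : Prop := pref b c /\ ~ pref c b.

Definition NonTriviality : Prop :=
  (forall phi, pref (point (Var Tv)) (point phi) /\ pref (point phi) (point (Var Fv)))
  /\ spref (point (Var Tv)) (point (Var Fv)).

Definition Complete : Prop :=
  forall b c, is_bet b -> is_bet c -> pref b c \/ pref c b.

Definition Transitive : Prop :=
  forall b c d, is_bet b -> is_bet c -> is_bet d -> pref b c -> pref c d -> pref b d.

Definition Archimedean : Prop :=
  forall b c d, is_bet b -> is_bet c -> is_bet d -> spref b c -> spref c d ->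
    exists a1 a2, 0 < a1 < 1 /\ 0 < a2 < 1 /\
      spref (mix a1 b d) c /\ spref c (mix a2 b d).

Definition Independence : Prop :=
  forall b c d a, is_bet b -> is_bet c -> is_bet d -> 0 < a <= 1 ->
    (pref b c <-> pref (mix a b d) (mix a c d)).

Definition ObjectiveEU : Prop :=
  Complete /\ Transitive /\ Archimedean /\ Independence.

Definition Implication : Prop :=
  forall phi psi, implies phi psi -> pref (point psi) (point phi).

Definition S_Implication (S : form P -> Prop) : Prop :=
  forall phi psi, implies_with S phi psi -> pref (point psi) (point phi).

End Logic.

(* Call s certain when betting on phi /\ s is at least as good as betting
   on phi, for every phi.  S-Implication holds exactly when every element
   of S is certain: necessity is the implication phi ==S==> phi /\ s, and
   for sufficiency compactness reduces phi ==S==> psi to finitely many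
   premises s1, ..., sn, after which transitivity chains
   phi <= phi /\ s1 <= ... <= psi, the last step by Implication.  Hence the
   certain elements of Th form the greatest S included in Th satisfying
   S-Implication; it is deductively closed, so it is the required
   sub-theory, and being greatest it is the only maximal one. *)
From Stdlib Require Import Reals List Classical ClassicalEpsilon Lra.
From mathcomp Require classical_sets.

Lemma list_split_union {T : Type} {A B : T -> Prop} {l : list T} :
  (forall x, In x l -> A x \/ B x) ->
  exists k, (forall x, In x k -> A x) /\ (forall x, In x l -> In x k \/ B x).
Proof.
  induction l as [|a l IH]; intros Hl.
  - exists nil. split; intros x [].
  - destruct IH as [k [HkA Hk]]; [intros x Hx; apply Hl; right; exact Hx|].
    destruct (Hl a (or_introl eq_refl)) as [Ha|Ha].
    + exists (a :: k). split.
      * intros x [<-|Hx]; auto.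
      * intros x [<-|Hx]; [left; left; reflexivity|].
        destruct (Hk x Hx); [left; right|right]; assumption.
    + exists k. split; [exact HkA|]. intros x [<-|Hx]; auto.
Qed.

Lemma list_in_chain {T : Type} {F : (T -> Prop) -> Prop} {X : T -> Prop} {l : list T} :
  (forall A B, F A -> F B -> (forall t, A t -> B t) \/ (forall t, B t -> A t)) ->
  (forall t, In t l -> X t \/ exists2 A, F A & A t) ->
  (forall t, In t l -> X t) \/ exists2 A, F A & forall t, In t l -> X t \/ A t.
Proof.
  intros Hchain. induction l as [|a l IH]; intros Hl.
  - left. intros t [].
  - destruct IH as [IH|[A HA IH]]; [intros t Ht; apply Hl; right; exact Ht| |];
      destruct (Hl a (or_introl eq_refl)) as [Ha|[B HB Ha]].
    + left. intros t [<-|Ht]; auto.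
    + right. exists B; [exact HB|]. intros t [<-|Ht]; auto.
    + right. exists A; [exact HA|]. intros t [<-|Ht]; auto.
    + right. destruct (Hchain A B HA HB) as [HAB|HBA].
      * exists B; [exact HB|]. intros t [<-|Ht]; [now right|].
        destruct (IH t Ht); auto.
      * exists A; [exact HA|]. intros t [<-|Ht]; auto.
Qed.

Section Compactness.
Context {P : Type} {Tv Fv : P}.

Definition models (v : P -> bool) (S : form P -> Prop) : Prop :=
  forall f, S f -> eval v f = true.

Definition satisfiable (S : form P -> Prop) : Prop :=
  exists v, admissible Tv Fv v /\ models v S.

Definition fin_satisfiable (S : form P -> Prop) : Prop :=
  forall l, (forall f, In f l -> S f) -> satisfiable (fun f => In f l).

Lemma models_app {v l1 l2} :
  models v (fun f => In f (l1 ++ l2)) ->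
  models v (fun f => In f l1) /\ models v (fun f => In f l2).
Proof.
  intros H; split; intros f Hf; apply H; apply in_or_app; auto.
Qed.

Lemma maximal_fin_satisfiable {X : form P -> Prop} : fin_satisfiable X ->
  exists M, (forall f, X f -> M f) /\ fin_satisfiable M /\
    forall f, fin_satisfiable (fun g => M g \/ g = f) -> M f.
Proof.
  intros HX.
  (* Zorn is applied to the extensions A of X, so that the empty chain is
     covered by fin_satisfiable X. *)
  destruct (@classical_sets.Zorn_bigcup _ (fun A => fin_satisfiable (fun f => X f \/ A f)))
    as [A [HA Hmax]].
  { intros F HF Hchain l Hl.
    destruct (list_in_chain Hchain Hl) as [HlX|[B HB HlB]].
    - exact (HX l HlX).
    - exact (HF B HB l HlB). }
  exists (fun f => X f \/ A f). split; [now left|split; [exact HA|]].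
  intros f Hf. apply NNPP. intros Hnf.
  apply (Hmax (fun g => A g \/ g = f)).
  - split; [now left|]. intros Hsub. apply Hnf. right. apply Hsub. now right.
  - intros l Hl. apply Hf. intros g Hg. destruct (Hl g Hg) as [H|[H|H]]; auto.
Qed.

Definition valuation_of (M : form P -> Prop) : P -> bool :=
  fun p => if excluded_middle_informative (M (Var p)) then true else false.

Section MaximalFinSatisfiable.
Variable M : form P -> Prop.
Hypothesis M_fin_sat : fin_satisfiable M.
Hypothesis M_maximal : forall f, fin_satisfiable (fun g => M g \/ g = f) -> M f.

Lemma maximal_closed l g :
  (forall f, In f l -> M f) ->
  (forall v, admissible Tv Fv v -> models v (fun f => In f l) -> eval v g = true) ->
  M g.
Proof.
  intros Hl Hg. apply M_maximal. intros l' Hl'.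
  destruct (list_split_union Hl') as [k [HkM Hk]].
  destruct (M_fin_sat (l ++ k)) as [v [Hv Hlk]].
  { intros f Hf. destruct (in_app_or _ _ _ Hf); auto. }
  destruct (models_app Hlk) as [Hvl Hvk].
  exists v. split; [exact Hv|]. intros f Hf.
  destruct (Hk f Hf) as [H | ->]; auto.
Qed.

Lemma maximal_Neg f : M (Neg f) <-> ~ M f.
Proof.
  split.
  - intros Hn Hf. destruct (M_fin_sat (f :: Neg f :: nil)) as [v [_ Hv]].
    { intros g [<-|[<-|[]]]; assumption. }
    assert (Hvf := Hv f (or_introl eq_refl)).
    assert (Hvn := Hv (Neg f) (or_intror (or_introl eq_refl))).
    simpl in Hvn. rewrite Hvf in Hvn. discriminate.
  - intros Hf. apply M_maximal. intros l2 Hl2. apply NNPP. intros Hl2_unsat.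
    apply Hf, M_maximal. intros l1 Hl1.
    (* A model of the M-parts of l1 and l2 makes f or Neg f true, hence
       satisfies l1 or l2. *)
    destruct (list_split_union Hl1) as [k1 [Hk1M Hk1]].
    destruct (list_split_union Hl2) as [k2 [Hk2M Hk2]].
    destruct (M_fin_sat (k1 ++ k2)) as [v [Hv Hk12]].
    { intros g Hg. destruct (in_app_or _ _ _ Hg); auto. }
    destruct (models_app Hk12) as [Hvk1 Hvk2].
    destruct (eval v f) eqn:Ef.
    + exists v. split; [exact Hv|]. intros g Hg.
      destruct (Hk1 g Hg) as [H | ->]; auto.
    + exfalso. apply Hl2_unsat. exists v. split; [exact Hv|]. intros g Hg.
      destruct (Hk2 g Hg) as [H | ->]; [auto|simpl; rewrite Ef; reflexivity].
Qed.

Lemma maximal_closed1 {a g} :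
  M a -> (forall v, eval v a = true -> eval v g = true) -> M g.
Proof.
  intros Ha Hg. apply (maximal_closed (a :: nil)); [intros f [<-|[]]; exact Ha|].
  intros v _ Hv. apply Hg, Hv. now left.
Qed.

Lemma maximal_closed2 {a b g} :
  M a -> M b -> (forall v, eval v a = true -> eval v b = true -> eval v g = true) -> M g.
Proof.
  intros Ha Hb Hg. apply (maximal_closed (a :: b :: nil)).
  - intros f [<-|[<-|[]]]; assumption.
  - intros v _ Hv. apply Hg; apply Hv; [now left|now right; left].
Qed.

Lemma maximal_eval f : eval (valuation_of M) f = true <-> M f.
Proof.
  induction f as [p|a IHa|a IHa b IHb|a IHa b IHb]; simpl.
  - unfold valuation_of. destruct (excluded_middle_informative (M (Var p)));
      intuition discriminate.
  - rewrite maximal_Neg, <- IHa. destruct (eval (valuation_of M) a); intuition discriminate.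
  - rewrite Bool.andb_true_iff, IHa, IHb. split.
    + intros [Ha Hb]. apply (maximal_closed2 Ha Hb).
      intros v Hva Hvb. simpl. rewrite Hva, Hvb. reflexivity.
    + intros Hab. split; apply (maximal_closed1 Hab);
        intros v Hv; simpl in Hv; apply Bool.andb_true_iff in Hv; tauto.
  - rewrite Bool.orb_true_iff, IHa, IHb. split.
    + intros [Ha|Hb]; [apply (maximal_closed1 Ha)|apply (maximal_closed1 Hb)];
        intros v Hv; simpl; rewrite Hv; [reflexivity|apply Bool.orb_true_r].
    + intros Hab. apply NNPP. intros Hn.
      apply (maximal_Neg (Or a b)); [|exact Hab].
      apply (@maximal_closed2 (Neg a) (Neg b)); [apply maximal_Neg; tauto..|].
      intros v. simpl. destruct (eval v a), (eval v b); simpl; congruence.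
Qed.

Lemma maximal_satisfiable : satisfiable M.
Proof.
  exists (valuation_of M).
  split; [split|intros f Hf; apply maximal_eval; exact Hf].
  - apply (maximal_eval (Var Tv)), (maximal_closed nil); [intros g []|].
    intros v [HT _] _. exact HT.
  - assert (HnF : ~ M (Var Fv)).
    { apply maximal_Neg, (maximal_closed nil); [intros g []|].
      intros v [_ HF] _. simpl. rewrite HF. reflexivity. }
    destruct (valuation_of M Fv) eqn:E; [|reflexivity].
    exfalso. apply HnF, (maximal_eval (Var Fv)). exact E.
Qed.

End MaximalFinSatisfiable.

Theorem compactness {X : form P -> Prop} : fin_satisfiable X -> satisfiable X.
Proof.
  intros HX.
  destruct (maximal_fin_satisfiable HX) as [M [HXM [HM Hmax]]].
  destruct (maximal_satisfiable M HM Hmax) as [v [Hv HvM]].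
  exists v. split; [exact Hv|]. intros f Hf. apply HvM, HXM, Hf.
Qed.

Lemma implies_with_finite {S : form P -> Prop} {phi psi} :
  implies_with Tv Fv S phi psi ->
  exists l, (forall f, In f l -> S f) /\ implies_with Tv Fv (fun f => In f l) phi psi.
Proof.
  intros Himp. apply NNPP. intros Hno.
  assert (HX : fin_satisfiable (fun f => S f \/ f = phi \/ f = Neg psi)).
  { intros l Hl. destruct (list_split_union Hl) as [k [HkS Hk]].
    apply NNPP. intros Hunsat. apply Hno. exists k. split; [exact HkS|].
    intros v Hv Hvk Hphi. destruct (eval v psi) eqn:Epsi; [reflexivity|].
    exfalso. apply Hunsat. exists v. split; [exact Hv|]. intros f Hf.
    destruct (Hk f Hf) as [H|[-> | ->]]; [auto|exact Hphi|simpl; rewrite Epsi; reflexivity]. }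
  destruct (compactness HX) as [v [Hv HvX]].
  assert (Hpsi : eval v psi = true).
  { apply Himp; [exact Hv|intros s Hs; apply HvX; now left|apply HvX; now right; left]. }
  assert (Hnpsi := HvX (Neg psi) (or_intror (or_intror eq_refl))).
  simpl in Hnpsi. rewrite Hpsi in Hnpsi. discriminate.
Qed.

End Compactness.

Lemma point_bet {P : Type} (phi : form P) : is_bet (point phi).
Proof.
  unfold is_bet, point. split.
  - intros f. destruct (excluded_middle_informative (f = phi)); lra.
  - exists (phi :: nil). split; [constructor; [intros []|constructor]|]. split.
    + intros f H. destruct (excluded_middle_informative (f = phi)); [left; auto|lra].
    + simpl. destruct (excluded_middle_informative (phi = phi)); [lra|congruence].
Qed.

Section Certainty.
Context {P : Type} {Tv Fv : P}.
Variable pref : bet P -> bet P -> Prop.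

Definition certain (s : form P) : Prop :=
  forall phi, pref (point (And phi s)) (point phi).

Lemma S_Implication_certain {S s} :
  S_Implication Tv Fv pref S -> S s -> certain s.
Proof.
  intros HS Hs phi. apply HS. intros v _ HvS Hphi. simpl.
  rewrite Hphi, (HvS s Hs). reflexivity.
Qed.

Hypothesis pref_trans : Transitive pref.
Hypothesis pref_Implication : Implication Tv Fv pref.

Lemma certain_list_Implication l :
  (forall s, In s l -> certain s) -> S_Implication Tv Fv pref (fun f => In f l).
Proof.
  induction l as [|s l IH]; intros Hl phi psi Himp; [exact (pref_Implication _ _ Himp)|].
  assert (Hpsi : pref (point psi) (point (And phi s))).
  { apply IH; [intros t Ht; apply Hl; now right|].
    intros v Hv Hvl Hphis. simpl in Hphis. apply Bool.andb_true_iff in Hphis.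
    destruct Hphis as [Hphi Hs]. apply Himp; [exact Hv| |exact Hphi].
    intros t [<-|Ht]; auto. }
  apply (pref_trans _ _ _ (point_bet _) (point_bet _) (point_bet _) Hpsi).
  apply Hl. now left.
Qed.

Lemma certain_S_Implication S :
  (forall s, S s -> certain s) -> S_Implication Tv Fv pref S.
Proof.
  intros HS phi psi Himp.
  destruct (implies_with_finite Himp) as [l [HlS Hl]].
  apply (certain_list_Implication l); [intros s Hs; apply HS, HlS, Hs|exact Hl].
Qed.

Variable Th : form P -> Prop.

Definition certain_part : form P -> Prop := fun f => Th f /\ certain f.

Lemma certain_part_Implication : S_Implication Tv Fv pref certain_part.
Proof.
  apply certain_S_Implication. intros s [_ Hs]. exact Hs.
Qed.

Lemma certain_part_greatest {S} :
  (forall f, S f -> Th f) -> S_Implication Tv Fv pref S -> forall f, S f -> certain_part f.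
Proof.
  intros HSTh HS f Hf. split; [exact (HSTh f Hf)|exact (S_Implication_certain HS Hf)].
Qed.

Lemma certain_part_theory : is_theory Tv Fv Th -> is_theory Tv Fv certain_part.
Proof.
  intros [Th_closed Th_consistent]. split.
  - intros g Hg. split.
    + apply Th_closed. intros v Hv HvTh. apply Hg; [exact Hv|].
      intros s [Hs _]. exact (HvTh s Hs).
    + intros phi. apply certain_part_Implication.
      intros v Hv Hvc Hphi. simpl. rewrite Hphi, (Hg v Hv Hvc). reflexivity.
  - intros [HF _]. exact (Th_consistent HF).
Qed.

End Certainty.

Theorem proposition5 (P : Type) (Tv Fv : P)
  (pref : bet P -> bet P -> Prop)
  (HNT : NonTriviality Tv Fv pref)
  (HEU : ObjectiveEU pref)
  (HImp : Implication Tv Fv pref)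
  (Th : form P -> Prop) (HTh : is_theory Tv Fv Th) :
  exists S : form P -> Prop,
    (is_theory Tv Fv S /\ (forall f, S f -> Th f) /\ S_Implication Tv Fv pref S /\
     (forall S' : form P -> Prop,
        (forall f, S f -> S' f) -> (exists f, S' f /\ ~ S f) ->
        (forall f, S' f -> Th f) -> ~ S_Implication Tv Fv pref S'))
    /\
    (forall S2 : form P -> Prop,
       is_theory Tv Fv S2 -> (forall f, S2 f -> Th f) -> S_Implication Tv Fv pref S2 ->
       (forall S' : form P -> Prop,
          (forall f, S2 f -> S' f) -> (exists f, S' f /\ ~ S2 f) ->
          (forall f, S' f -> Th f) -> ~ S_Implication Tv Fv pref S') ->
       forall f, S2 f <-> S f).
Proof.
  destruct HEU as [_ [Htrans _]].
  pose proof (certain_part_Implication pref Htrans HImp Th) as HImp_part.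
  exists (certain_part pref Th). split; [split; [|split; [|split]]|].
  - exact (certain_part_theory pref Htrans HImp Th HTh).
  - intros f [Hf _]. exact Hf.
  - exact HImp_part.
  - intros S' _ [f [HS'f Hnf]] HS'Th HS'. apply Hnf.
    exact (certain_part_greatest pref Th HS'Th HS' _ HS'f).
  - intros S2 _ HS2Th HS2 HS2max f. split.
    + exact (certain_part_greatest pref Th HS2Th HS2 f).
    + intros Hf. apply NNPP. intros Hnf.
      apply (HS2max (certain_part pref Th)); [|exists f; now split| |exact HImp_part].
      * exact (certain_part_greatest pref Th HS2Th HS2).
      * intros g [Hg _]. exact Hg.
Qed.
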